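(* Let $R$ be a field, $S$ an idempotent semifield and $v:R\to S$ a B\'ezout valuation. Then $v$ is surjective if and only if its restriction $v^\circ:R^\circ\to S^\circ$ is surjective.
   Context: An idempotent semiring is commutative with $a+a=a$, ordered by $a\le b$ iff $a+b=b$; a semifield has nonzero elements invertible. A valuation $v:R\to S$ satisfies $v(0)=0$, $v(1)=v(-1)=1$, $v(ab)=v(a)v(b)$, $v(a+b)\le v(a)+v(b)$, $v(a)\ne0$ for $a\ne0$. $R^\circ=\{a\in R:v(a)\le1\}$, $S^\circ=\{x\in S:x\le1\}$. $v$ is B\'ezout if for all $a,b\in R$ there are $x,y\in R^\circ$ with $v(xa+yb)=v(a)+v(b)$. *)

From HB Require Import structures.
From mathcomp Require Import all_boot all_order all_algebra.
Set Implicit Arguments. Unset Strict Implicit. Unset Printing Implicit Defensive.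
Import GRing.Theory.
Local Open Scope ring_scope.

Definition idempotent_semiring (S : comNzSemiRingType) : Prop :=
  forall a : S, a + a = a.

Definition is_semifield (S : comNzSemiRingType) : Prop :=
  forall a : S, a != 0 -> exists b : S, a * b = 1.

Definition sle (S : comNzSemiRingType) (a b : S) : Prop := a + b = b.

Definition is_valuation (R : fieldType) (S : comNzSemiRingType) (v : R -> S) : Prop :=
  [/\ v 0 = 0, v 1 = 1, v (-1) = 1,
      (forall a b, v (a * b) = v a * v b) &
      [/\ (forall a b, sle (v (a + b)) (v a + v b)) &
           (forall a, a != 0 -> v a != 0)]].

Definition val_ring (R : fieldType) (S : comNzSemiRingType) (v : R -> S) (a : R) : Prop :=
  sle (v a) 1.

Definition semi_unit_ball (S : comNzSemiRingType) (x : S) : Prop := sle x 1.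

Definition bezout_valuation (R : fieldType) (S : comNzSemiRingType) (v : R -> S) : Prop :=
  forall a b : R, exists x y : R,
    [/\ val_ring v x, val_ring v y & v (x * a + y * b) = v a + v b].

Definition restr_surjective (R : fieldType) (S : comNzSemiRingType) (v : R -> S) : Prop :=
  forall s : S, semi_unit_ball s -> exists a : R, val_ring v a /\ v a = s.

From mathcomp Require Import all_boot all_order all_algebra.
Set Implicit Arguments. Unset Strict Implicit. Unset Printing Implicit Defensive.
Import GRing.Theory.
Local Open Scope ring_scope.

(* Every s in an idempotent semifield is a quotient of two elements of the
   unit ball: t := s + 1 dominates both 1 and s, so t^-1 and s t^-1 lie below
   1, and s = (s t^-1) / t^-1.  Lifting numerator and denominator through v°
   and dividing in R lifts s. *)

Section IdempotentSemifield.

Variable S : comNzSemiRingType.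
Hypothesis idemS : idempotent_semiring S.
Hypothesis semifieldS : is_semifield S.

Lemma sle_addl (x y : S) : sle x (x + y).
Proof. by rewrite /sle addrA idemS. Qed.

Lemma sle_addr (x y : S) : sle y (x + y).
Proof. by rewrite /sle addrCA idemS. Qed.

Lemma sle_mulr (z x y : S) : sle x y -> sle (x * z) (y * z).
Proof. by rewrite /sle -mulrDl => ->. Qed.

Lemma sle1_neq0 (t : S) : sle 1 t -> t != 0.
Proof.
by move=> le1t; apply/eqP => t0; move: le1t; rewrite /sle t0 addr0 => /eqP; rewrite oner_eq0.
Qed.

Lemma semifield_mulIf (y a b : S) : y != 0 -> a * y = b * y -> a = b.
Proof.
move=> /semifieldS [w yw] ab.
by rewrite -[a]mulr1 -[b]mulr1 -yw !mulrA ab.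
Qed.

Lemma semifield_ratio_unit_ball (s : S) :
  exists x y : S, [/\ semi_unit_ball x, semi_unit_ball y, y != 0 & s * y = x].
Proof.
have t_neq0 : s + 1 != 0 by apply/sle1_neq0/sle_addr.
have [u tu] := semifieldS t_neq0.
have below1 z : sle z (s + 1) -> semi_unit_ball (z * u).
  by move=> /(sle_mulr u); rewrite tu.
exists (s * u), u; split=> //.
- exact/below1/sle_addl.
- by rewrite -[u]mul1r; apply/below1/sle_addr.
- by apply/eqP => u0; move: tu; rewrite u0 mulr0 => /eqP; rewrite eq_sym oner_eq0.
Qed.

End IdempotentSemifield.

Lemma valuation_divfK (R : fieldType) (S : comNzSemiRingType) (v : R -> S) :
  is_valuation v -> forall a b : R, b != 0 -> v (a / b) * v b = v a.
Proof. by move=> [_ _ _ vM _] a b b_neq0; rewrite -vM divfK. Qed.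

Theorem corollary2p16 (R : fieldType) (S : comNzSemiRingType) (v : R -> S) :
  idempotent_semiring S -> is_semifield S ->
  is_valuation v -> bezout_valuation v ->
  ((forall s : S, exists a : R, v a = s) <-> restr_surjective v).
Proof.
move=> idemS semifieldS v_val _; split.
  by move=> v_surj s s1; have [a va] := v_surj s; exists a; rewrite /val_ring va.
move=> restr_surj s.
have [x [y [x1 y1 y_neq0 sy]]] := semifield_ratio_unit_ball idemS semifieldS s.
have [d [_ vd]] := restr_surj x x1.
have [c [_ vc]] := restr_surj y y1.
have c_neq0 : c != 0.
  by apply: contra_neq y_neq0 => c0; rewrite -vc c0; case: v_val.
exists (d / c); apply: (semifield_mulIf semifieldS y_neq0).
by rewrite -{1}vc valuation_divfK // vd sy.
Qed.
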